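(* Let $C_\theta=\cos\theta\,(|\uparrow\rangle\langle\uparrow|+|\downarrow\rangle\langle\downarrow|)+\sin\theta\,(|\uparrow\rangle\langle\downarrow|-|\downarrow\rangle\langle\uparrow|)$ and $\gamma_{\varphi}=\cos\varphi\,|\uparrow\rangle+\sin\varphi\,|\downarrow\rangle$. (i) If $\theta\in(0,\pi/2)$ and $\varphi_1,\varphi_2\in[0,\pi/2]$ satisfy $\varphi_1+\varphi_2=\theta$, then $(C_\theta,\gamma_{\varphi_1})\sim_l(C_\theta,\gamma_{\varphi_2})$. (ii) For $\theta=1.2$, $\varphi_1=0.2$, $\varphi_2=1.0$, the setups $(C_\theta,\gamma_{\varphi_1})$ and $(C_\theta,\gamma_{\varphi_2})$ are not distributionally equivalent; in particular $p_{(C_\theta,\gamma_{\varphi_1})}(\cdot,2)\neq p_{(C_\theta,\gamma_{\varphi_2})}(\cdot,2)$. Hence asymptotic distributional equivalence does not imply distributional equivalence.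
   Context: $\mathcal{H}=\ell^2(\mathbb{Z})\otimes\mathbb{C}^2$ with position basis $\{|j\rangle\}$ and coin basis $\{|\uparrow\rangle,|\downarrow\rangle\}$. A coin $C=a|\uparrow\rangle\langle\uparrow|+b|\uparrow\rangle\langle\downarrow|+c|\downarrow\rangle\langle\uparrow|+d|\downarrow\rangle\langle\downarrow|\in U(2)$ is non-trivial iff $abcd\neq0$. $T=\sum_{j}|j+1\rangle\langle j|\otimes|\uparrow\rangle\langle\uparrow|+\sum_{j}|j-1\rangle\langle j|\otimes|\downarrow\rangle\langle\downarrow|$, $W(C)=T(\mathbb{1}\otimes C)$. A coin setup $(C,\gamma)$, $\gamma=\alpha|\uparrow\rangle+\beta|\downarrow\rangle$ a unit vector, induces $p_{(C,\gamma)}(j,n)=\langle\psi_n|(|j\rangle\langle j|\otimes\mathbb{1})|\psi_n\rangle$, $\psi_n=W(C)^n(|0\rangle\otimes\gamma)$. Distributional equivalence $\mathcal{C}_1\sim_d\mathcal{C}_2$ means $p_{\mathcal{C}_1}(j,n)=p_{\mathcal{C}_2}(j,n)$ for all $j\in\mathbb{Z}$, $n\in\mathbb{N}$. Known fact (Konno): for a non-trivial coin, if $X_n\sim p_{\mathcal{C}}(\cdot,n)$ then $X_n/n$ converges in distribution to the law with density $f_{\mathcal{C}}(x)=\dfrac{\sqrt{1-|a|^2}\,(1-\lambda_{\mathcal{C}}x)}{\pi(1-x^2)\sqrt{|a|^2-x^2}}$ on $(-|a|,|a|)$ (zero elsewhere), with $\lambda_{\mathcal{C}}=|\alpha|^2-|\beta|^2+\frac{a\alpha\overline{b\beta}+\overline{a\alpha}b\beta}{|a|^2}$.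 Asymptotic distributional equivalence $\mathcal{C}_1\sim_l\mathcal{C}_2$ (for non-trivial coins) means $f_{\mathcal{C}_1}=f_{\mathcal{C}_2}$. *)

From Stdlib Require Import Reals ZArith.
From Coquelicot Require Import Coquelicot.
Open Scope R_scope.

(* A coin C = a|u><u| + b|u><d| + c|d><u| + d|d><d|. *)
Record coin := Coin { ca : C; cb : C; cc : C; cd : C }.

Definition unitary (K : coin) : Prop :=
  Cplus (Cmult (Cconj (ca K)) (ca K)) (Cmult (Cconj (cc K)) (cc K)) = RtoC 1 /\
  Cplus (Cmult (Cconj (cb K)) (cb K)) (Cmult (Cconj (cd K)) (cd K)) = RtoC 1 /\
  Cplus (Cmult (Cconj (ca K)) (cb K)) (Cmult (Cconj (cc K)) (cd K)) = RtoC 0.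

Definition nontrivial (K : coin) : Prop :=
  ca K <> RtoC 0 /\ cb K <> RtoC 0 /\ cc K <> RtoC 0 /\ cd K <> RtoC 0.

(* coin state gamma = alpha|u> + beta|d>, as the pair (alpha, beta) *)
Definition cstate := (C * C)%type.

Definition setup := (coin * cstate)%type.

(* Vectors of l^2(Z) (x) C^2 as functions Z -> C^2 (psi j = (up, down)). *)
Definition apply_coin (K : coin) (v : cstate) : cstate :=
  (Cplus (Cmult (ca K) (fst v)) (Cmult (cb K) (snd v)),
   Cplus (Cmult (cc K) (fst v)) (Cmult (cd K) (snd v))).

(* W(C) = T (1 (x) C): apply C at every site, then shift up-component
   from j to j+1 and down-component from j to j-1. *)
Definition W (K : coin) (psi : Z -> cstate) : Z -> cstate :=
  fun j => (fst (apply_coin K (psi (j - 1)%Z)), snd (apply_coin K (psi (j + 1)%Z))).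

Definition init (g : cstate) : Z -> cstate :=
  fun j => if Z.eq_dec j 0 then g else (RtoC 0, RtoC 0).

Fixpoint psi (S : setup) (n : nat) : Z -> cstate :=
  match n with
  | O => init (snd S)
  | Datatypes.S m => W (fst S) (psi S m)
  end.

(* p_S(j, n) = <psi_n | (|j><j| (x) 1) | psi_n> *)
Definition p (S : setup) (j : Z) (n : nat) : R :=
  (Cmod (fst (psi S n j)))^2 + (Cmod (snd (psi S n j)))^2.

Definition dist_equiv (S1 S2 : setup) : Prop :=
  forall (j : Z) (n : nat), p S1 j n = p S2 j n.

(* lambda_C = |alpha|^2 - |beta|^2 + (a alpha conj(b beta) + conj(a alpha) b beta)/|a|^2
   (the numerator is real; we take its real part). *)
Definition lambda (S : setup) : R :=
  let K := fst S in let al := fst (snd S) in let be := snd (snd S) in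
  (Cmod al)^2 - (Cmod be)^2
  + Re (Cplus (Cmult (Cmult (ca K) al) (Cconj (Cmult (cb K) be)))
              (Cmult (Cconj (Cmult (ca K) al)) (Cmult (cb K) be)))
    / (Cmod (ca K))^2.

Definition f_lim (S : setup) (x : R) : R :=
  let A := Cmod (ca (fst S)) in
  if Rlt_dec (- A) x then
    if Rlt_dec x A then
      sqrt (1 - A^2) * (1 - lambda S * x) / (PI * (1 - x^2) * sqrt (A^2 - x^2))
    else 0
  else 0.

Definition asym_equiv (S1 S2 : setup) : Prop :=
  nontrivial (fst S1) /\ nontrivial (fst S2) /\ f_lim S1 = f_lim S2.

Definition Ctheta (t : R) : coin :=
  Coin (RtoC (cos t)) (RtoC (sin t)) (RtoC (- sin t)) (RtoC (cos t)).
Definition gamma_phi (f : R) : cstate := (RtoC (cos f), RtoC (sin f)).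

(** Both setups use the same coin [C_theta], so the limit densities can only
    differ through [lambda], which for [gamma_phi] equals
    [cos (theta - 2 phi) / cos theta]; when [phi1 + phi2 = theta] the two
    angles [theta - 2 phi_i] are opposite, so the densities coincide.  After
    two steps the amplitude at site 2 is [(cos theta cos (theta - phi), 0)],
    and for [theta = 1.2] the values [cos 1] and [cos 0.2] give different
    probabilities there. *)

From Stdlib Require Import Reals ZArith Lra FunctionalExtensionality.
From Coquelicot Require Import Coquelicot.
Open Scope R_scope.

Lemma Cmod_RtoC_sqr (x : R) : Cmod (RtoC x) ^ 2 = x ^ 2.
Proof. rewrite Cmod_R, <- (pow2_abs x); reflexivity. Qed.

Lemma RtoC_neq0 (x : R) : x <> 0 -> RtoC x <> RtoC 0.
Proof. intros Hx E; injection E; auto. Qed.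

Lemma sin_sqr_add_cos_sqr (x : R) : sin x ^ 2 + cos x ^ 2 = 1.
Proof. pose proof (sin2_cos2 x) as H; unfold Rsqr in H; lra. Qed.

Lemma Ctheta_unitary (t : R) : unitary (Ctheta t).
Proof.
  pose proof (sin_sqr_add_cos_sqr t).
  unfold unitary, Ctheta; simpl; unfold Cplus, Cmult, Cconj, RtoC; simpl.
  repeat split; f_equal; nra.
Qed.

Lemma Ctheta_nontrivial (t : R) : cos t <> 0 -> sin t <> 0 -> nontrivial (Ctheta t).
Proof.
  intros Hc Hs; unfold nontrivial, Ctheta; simpl.
  repeat split; apply RtoC_neq0; lra.
Qed.

Lemma gamma_phi_normalized (f : R) :
  Cmod (fst (gamma_phi f)) ^ 2 + Cmod (snd (gamma_phi f)) ^ 2 = 1.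
Proof.
  unfold gamma_phi; simpl fst; simpl snd; rewrite !Cmod_RtoC_sqr.
  pose proof (sin_sqr_add_cos_sqr f); lra.
Qed.

Lemma lambda_Ctheta_gamma (t f : R) :
  cos t <> 0 -> lambda (Ctheta t, gamma_phi f) = cos (t - 2 * f) / cos t.
Proof.
  intros Hc; unfold lambda, Ctheta, gamma_phi; simpl fst; simpl snd; simpl ca; simpl cb.
  rewrite !Cmod_RtoC_sqr, cos_minus, cos_2a, sin_2a.
  unfold Cplus, Cmult, Cconj, RtoC, Re; simpl.
  field; exact Hc.
Qed.

Lemma f_lim_Ctheta_gamma_complementary (t f1 f2 : R) :
  cos t <> 0 -> f1 + f2 = t ->
  f_lim (Ctheta t, gamma_phi f1) = f_lim (Ctheta t, gamma_phi f2).
Proof.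
  intros Hc Hsum; apply functional_extensionality; intros x; unfold f_lim.
  rewrite !lambda_Ctheta_gamma by exact Hc.
  replace (t - 2 * f2) with (- (t - 2 * f1)) by lra.
  rewrite cos_neg; reflexivity.
Qed.

Lemma asym_equiv_Ctheta_complementary (t f1 f2 : R) :
  0 < t < PI / 2 -> f1 + f2 = t ->
  asym_equiv (Ctheta t, gamma_phi f1) (Ctheta t, gamma_phi f2).
Proof.
  intros Ht Hsum.
  assert (Hc : 0 < cos t) by (apply cos_gt_0; lra).
  assert (Hs : 0 < sin t) by (apply sin_gt_0; lra).
  assert (NT : nontrivial (Ctheta t)) by (apply Ctheta_nontrivial; lra).
  split; [exact NT | split; [exact NT |]].
  apply f_lim_Ctheta_gamma_complementary; lra.
Qed.

Lemma psi_Ctheta_gamma_2_2 (t f : R) :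
  psi (Ctheta t, gamma_phi f) 2 2%Z = (RtoC (cos t * cos (t - f)), RtoC 0).
Proof.
  simpl psi; unfold W, init, apply_coin; simpl.
  rewrite cos_minus; unfold RtoC.
  f_equal; unfold Cplus, Cmult; simpl; f_equal; ring.
Qed.

Lemma p_Ctheta_gamma_2_2 (t f : R) :
  p (Ctheta t, gamma_phi f) 2%Z 2 = (cos t * cos (t - f)) ^ 2.
Proof.
  unfold p; rewrite psi_Ctheta_gamma_2_2; simpl fst; simpl snd.
  rewrite !Cmod_RtoC_sqr; ring.
Qed.

Lemma cos_sqr_lt (x y : R) : 0 <= x -> x < y -> y <= PI / 2 -> cos y ^ 2 < cos x ^ 2.
Proof.
  intros Hx Hxy Hy.
  assert (Hcx : 0 < cos x) by (apply cos_gt_0; lra).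
  assert (Hcy : 0 <= cos y) by (apply cos_ge_0; lra).
  assert (Hlt : cos y < cos x) by (apply cos_decreasing_1; pose proof PI_RGT_0; lra).
  nra.
Qed.

Lemma p_Ctheta_gamma_2_2_neq (t f1 f2 : R) :
  cos t <> 0 -> 0 <= t - f2 -> t - f2 < t - f1 -> t - f1 <= PI / 2 ->
  p (Ctheta t, gamma_phi f1) 2%Z 2 <> p (Ctheta t, gamma_phi f2) 2%Z 2.
Proof.
  intros Hc H2 H21 H1.
  rewrite !p_Ctheta_gamma_2_2, !Rpow_mult_distr.
  pose proof (cos_sqr_lt _ _ H2 H21 H1).
  assert (0 < cos t ^ 2) by (apply pow2_gt_0; exact Hc).
  nra.
Qed.

Theorem mainTheorem6 :
  (forall theta phi1 phi2 : R,
     0 < theta < PI / 2 ->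
     0 <= phi1 <= PI / 2 -> 0 <= phi2 <= PI / 2 ->
     phi1 + phi2 = theta ->
     asym_equiv (Ctheta theta, gamma_phi phi1) (Ctheta theta, gamma_phi phi2)) /\
  (~ dist_equiv (Ctheta (12/10), gamma_phi (2/10)) (Ctheta (12/10), gamma_phi 1) /\
   exists j : Z,
     p (Ctheta (12/10), gamma_phi (2/10)) j 2 <> p (Ctheta (12/10), gamma_phi 1) j 2) /\
  (exists S1 S2 : setup,
     unitary (fst S1) /\ unitary (fst S2) /\
     Cmod (fst (snd S1)) ^ 2 + Cmod (snd (snd S1)) ^ 2 = 1 /\
     Cmod (fst (snd S2)) ^ 2 + Cmod (snd (snd S2)) ^ 2 = 1 /\
     asym_equiv S1 S2 /\ ~ dist_equiv S1 S2).
Proof.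
  pose proof PI2_3_2.
  assert (Hp2 : p (Ctheta (12/10), gamma_phi (2/10)) 2%Z 2
                <> p (Ctheta (12/10), gamma_phi 1) 2%Z 2).
  { assert (0 < cos (12/10)) by (apply cos_gt_0; lra).
    apply p_Ctheta_gamma_2_2_neq; lra. }
  assert (Hnd : ~ dist_equiv (Ctheta (12/10), gamma_phi (2/10))
                             (Ctheta (12/10), gamma_phi 1))
    by (intros E; apply Hp2, E).
  split; [intros; apply asym_equiv_Ctheta_complementary; lra |].
  split; [split; [exact Hnd | exists 2%Z; exact Hp2] |].
  exists (Ctheta (12/10), gamma_phi (2/10)), (Ctheta (12/10), gamma_phi 1).
  refine (conj (Ctheta_unitary _) (conj (Ctheta_unitary _)
            (conj (gamma_phi_normalized _) (conj (gamma_phi_normalized _)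
            (conj _ Hnd))))).
  apply asym_equiv_Ctheta_complementary; lra.
Qed.
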